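(* Let $P_0$ be a distribution of $(Y,\mathbf{X},\mathbf{Z})$ as in the context, with error density $g_0$ and expectation $E_0$. Define \[ I_{\mathrm{add}}=I_{g_0}\,E_0[\mathbf{X}-\boldsymbol\eta(\mathbf{Z})][\mathbf{X}-\boldsymbol\eta(\mathbf{Z})]^\top,\qquad I_{\mathrm{PL}}=I_{g_0}\,E_0[\mathbf{X}-E_0(\mathbf{X}\mid\mathbf{Z})][\mathbf{X}-E_0(\mathbf{X}\mid\mathbf{Z})]^\top . \] Suppose $I_{\mathrm{PL}}$ is positive definite. Then $I_{\mathrm{add}}^{-1}<I_{\mathrm{PL}}^{-1}$ unless \[ E_0[\boldsymbol\eta(\mathbf{Z})-E_0(\mathbf{X}\mid\mathbf{Z})][\boldsymbol\eta(\mathbf{Z})-E_0(\mathbf{X}\mid\mathbf{Z})]^\top=\mathbf{O}, \] where $\mathbf{O}$ is the $p\times p$ zero matrix. Here, for symmetric matrices, $A<B$ means that $B-A$ is non-negative definite and $A\neq B$.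
   Context: Data model: $(Y,\mathbf{X},\mathbf{Z})$ with $\mathbf{X}\in\mathbb{R}^p$ and $\mathbf{Z}\in\mathbb{R}^d$ satisfies $Y=\mathbf{X}^\top\boldsymbol\beta^0+m^0(\mathbf{Z})+\epsilon$. The error $\epsilon$ is independent of $(\mathbf{X},\mathbf{Z})$ and has a symmetric, absolutely continuous density $g_0$ with $I_{g_0}=\int (g_0')^2/g_0<\infty$. $(\mathbf{X},\mathbf{Z})$ has a joint density $q_0$ (with respect to a $\sigma$-finite measure times Lebesgue measure), and $\mathbf{Z}$ has compact support $[0,1]^d$. $\mathcal{H}(q_0)$ is the closed subspace of $L_2(q_0)$ of functions $m(\mathbf{z})=\sum_{j=1}^d m_j(z_j)$ with $E_0 m_j(Z_j)=0$ for all $j$. Set $\boldsymbol\eta=(\eta_1,\ldots,\eta_p)^\top$, where $\eta_j$ is the $L_2(q_0)$-projection of $\mathbf{z}\mapsto E_0(X_j\mid\mathbf{Z}=\mathbf{z})$ onto $\mathcal{H}(q_0)$. Interpretation: $I_{\mathrm{add}}$ is the semi-parametric information bound for $\boldsymbol\beta$ in the partially linear additive model, where $m^0$ is additive. $I_{\mathrm{PL}}$ is the bound in the partially linear model, where $m^0$ is an arbitrary function of $\mathbf{Z}$. *)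

From HB Require Import structures.
From mathcomp Require Import all_boot all_order all_algebra.
From mathcomp Require Import all_classical all_reals all_analysis.
Set Implicit Arguments. Unset Strict Implicit. Unset Printing Implicit Defensive.
Import Order.TTheory GRing.Theory Num.Theory.
Import numFieldNormedType.Exports.
Local Open Scope classical_set_scope.
Local Open Scope ring_scope.

Section defs.
Context {d0 : measure_display} {Omega : measurableType d0} {R : realType}.

Definition sigma_gen (n : nat) (F : 'I_n -> Omega -> R) : set (set Omega) :=
  g_sigma_preimage F.

Definition sigma_gen1 (f : Omega -> R) : set (set Omega) :=
  <<s preimage_set_system setT f measurable >>.

Definition measurable_wrt (G : set (set Omega)) (W : Omega -> R) : Prop :=
  forall B : set R, measurable B -> G (W @^-1` B).

Definition Ex (P : probability Omega R) (f : Omega -> R) : R := fine ('E_P[f])%E.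

Definition is_cond_exp (P : probability Omega R) (G : set (set Omega))
    (X m : Omega -> R) : Prop :=
  [/\ measurable_wrt G m, m \in Lfun P 1%:E &
      forall A, G A -> (\int[P]_(w in A) (X w)%:E = \int[P]_(w in A) (m w)%:E)%E].

(* h belongs to H(q0): h(Z) = sum_k h_k(Z_k), h_k(Z_k) square integrable with
   E h_k(Z_k) = 0 *)
Definition in_additive_space (P : probability Omega R) (d : nat)
    (Z : 'I_d -> Omega -> R) (h : Omega -> R) : Prop :=
  exists c : 'I_d -> Omega -> R,
    (forall k, [/\ measurable_wrt (sigma_gen1 (Z k)) (c k),
                  c k \in Lfun P 2%:E & Ex P (c k) = 0]) /\
    (forall w, h w = \sum_(k < d) c k w).

Definition is_proj_additive (P : probability Omega R) (d : nat)
    (Z : 'I_d -> Omega -> R) (m eta : Omega -> R) : Prop :=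
  in_additive_space P Z eta /\
  forall h, in_additive_space P Z h -> Ex P (fun w => (m w - eta w) * h w) = 0.

Definition second_moment_mx (P : probability Omega R) (p : nat)
    (U : 'I_p -> Omega -> R) : 'M[R]_p :=
  \matrix_(i, j) Ex P (fun w => U i w * U j w).

Definition indep_of (P : probability Omega R) (eps : Omega -> R)
    (G : set (set Omega)) : Prop :=
  forall B : set R, measurable B -> forall A, G A ->
    P (eps @^-1` B `&` A) = (P (eps @^-1` B) * P A)%E.

Definition has_density (P : probability Omega R) (eps : Omega -> R) (g : R -> R) :
  Prop :=
  [/\ forall x, 0 <= g x, measurable_fun setT g &
      forall B : set R, measurable B ->
        P (eps @^-1` B) = (\int[lebesgue_measure]_(x in B) (g x)%:E)%E].

End defs.

Section realdefs.
Context {R : realType}.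

Definition abs_cont_with_deriv (g g' : R -> R) : Prop :=
  forall a b : R, a <= b ->
    (lebesgue_measure : measure _ R).-integrable `[a, b] (EFin \o g') /\
    g b - g a = \int[lebesgue_measure]_(x in `[a, b]) g' x.

Definition fisher_info_e (g g' : R -> R) : \bar R :=
  (\int[lebesgue_measure]_(x in [set x | (0 < g x)%R]) ((g' x) ^+ 2 / g x)%:E)%E.

Definition fisher_info (g g' : R -> R) : R := fine (fisher_info_e g g').

Definition nonneg_def (p : nat) (A : 'M[R]_p) : Prop :=
  forall v : 'cV[R]_p, 0 <= (v^T *m A *m v) ord0 ord0.

Definition pos_def (p : nat) (A : 'M[R]_p) : Prop :=
  forall v : 'cV[R]_p, v != 0 -> 0 < (v^T *m A *m v) ord0 ord0.

Definition loewner_lt (p : nat) (A B : 'M[R]_p) : Prop :=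
  nonneg_def (B - A) /\ A != B.

End realdefs.

From HB Require Import structures.
From mathcomp Require Import all_boot all_order all_algebra.
From mathcomp Require Import all_classical all_reals all_analysis.
From mathcomp Require Import measurable_realfun.
From mathcomp Require Import lra ring.
Import Order.TTheory GRing.Theory Num.Theory.
Import numFieldNormedType.Exports.
Local Open Scope classical_set_scope.
Local Open Scope ring_scope.
Set Implicit Arguments. Unset Strict Implicit. Unset Printing Implicit Defensive.

(* Write c = E0(X | Z).  Since eta(Z) - c is a square-integrable function of Z,
   it is orthogonal to X - c, so
     E[(X - eta)(X - eta)^T] = E[(X - c)(X - c)^T] + E[(eta - c)(eta - c)^T],
   i.e. I_add = I_PL + I_g M with M >= 0.  For a positive definite S and a
   non-negative definite T one has
     v^T (S^-1 - (S + T)^-1) v = (x - y)^T S (x - y) + y^T T y >= 0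
   with x = S^-1 v and y = (S + T)^-1 v, and (S + T)^-1 = S^-1 forces T = 0.
   As the conditional expectation is only characterised by its set integrals,
   its square integrability and this orthogonality are obtained by testing
   against staircase approximations of bounded Z-measurable functions, followed
   by truncation and monotone/dominated convergence. *)

Section expectation.
Context {d : measure_display} {T : measurableType d} {R : realType}.
Variable P : probability T R.
Implicit Types f g : T -> R.

Local Notation Int f := (P.-integrable setT (EFin \o f)).

Definition L2 f := measurable_fun setT f /\ Int (fun x => f x ^+ 2).

Definition E f : R := Rintegral P setT f.

Lemma ExE f : Ex P f = E f.
Proof. by rewrite /Ex /E /Rintegral unlock. Qed.

Lemma Int_measurable f : Int f -> measurable_fun setT f.
Proof. by move=> /integrableP[/measurable_EFinP]. Qed.

Lemma Int_le f g : measurable_fun setT f -> Int g ->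
  (forall x, `|f x| <= g x) -> Int f.
Proof.
move=> mf ig fg; apply: le_integrable ig => //; first exact/measurable_EFinP.
by move=> x _ /=; rewrite lee_fin (le_trans (fg x)) ?ler_norm.
Qed.

Lemma eq_Int f g : (forall x, f x = g x) -> Int f -> Int g.
Proof. by move=> fg; apply: (eq_integrable measurableT) => x _ /=; rewrite fg. Qed.

Lemma IntD f g : Int f -> Int g -> Int (fun x => f x + g x).
Proof. by move=> hf hg; apply: eq_integrable (integrableD measurableT hf hg). Qed.

Lemma IntZ k f : Int f -> Int (fun x => k * f x).
Proof. by move=> hf; apply: eq_integrable (integrableZl measurableT k hf). Qed.

Lemma IntB f g : Int f -> Int g -> Int (fun x => f x - g x).
Proof.
move=> hf /(IntZ (-1)) hg; apply: eq_Int (IntD hf hg) => x.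
by rewrite mulN1r.
Qed.

Lemma Int_cst k : Int (fun _ => k).
Proof. exact: finite_measure_integrable_cst. Qed.

Lemma Int_sum (I : Type) (s : seq I) (F : I -> T -> R) :
  (forall i, Int (F i)) -> Int (fun x => \sum_(i <- s) F i x).
Proof.
move=> hF; elim: s => [|i s ih].
  by apply: eq_Int (Int_cst 0) => x; rewrite big_nil.
by apply: eq_Int (IntD (hF i) ih) => x; rewrite big_cons.
Qed.

Lemma Int_norm f : Int f -> Int (fun x => `|f x|).
Proof.
move=> hf; have mf : measurable_fun setT (fun x => `|f x|).
  by apply: measurableT_comp => //; exact: Int_measurable.
apply: le_integrable hf => //; first exact/measurable_EFinP.
by move=> x _ /=; rewrite normr_id.
Qed.

Lemma IntM_bounded f (u : T -> R) (M : R) : Int f -> measurable_fun setT u ->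
  (forall x, `|u x| <= M) -> Int (fun x => f x * u x).
Proof.
move=> hf mu hu; apply: Int_le (IntZ M (Int_norm hf)) _.
  by apply: measurable_funM => //; exact: Int_measurable.
by move=> x; rewrite normrM mulrC ler_wpM2r.
Qed.

Lemma ED f g : Int f -> Int g -> E (fun x => f x + g x) = E f + E g.
Proof. by move=> hf hg; rewrite /E RintegralD. Qed.

Lemma EB f g : Int f -> Int g -> E (fun x => f x - g x) = E f - E g.
Proof. by move=> hf hg; rewrite /E RintegralB. Qed.

Lemma EZ k f : Int f -> E (fun x => k * f x) = k * E f.
Proof. by move=> hf; rewrite /E RintegralZl. Qed.

Lemma E_cst k : E (fun _ => k) = k.
Proof.
have P1 : fine (P [set: T]) = 1 by rewrite probability_setT.
by rewrite /E Rintegral_cst // P1 mulr1.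
Qed.

Lemma eq_E f g : (forall x, f x = g x) -> E f = E g.
Proof. by move=> fg; apply: eq_Rintegral => x _; rewrite fg. Qed.

Lemma E_sum (I : Type) (s : seq I) (F : I -> T -> R) :
  (forall i, Int (F i)) -> E (fun x => \sum_(i <- s) F i x) = \sum_(i <- s) E (F i).
Proof.
move=> hF; elim: s => [|i s ih].
  by rewrite big_nil (@eq_E _ (fun _ => 0)) ?E_cst // => x; rewrite big_nil.
rewrite big_cons -ih -ED ?Int_sum //.
by apply: eq_E => x; rewrite big_cons.
Qed.

Lemma ler_E f g : Int f -> Int g -> (forall x, f x <= g x) -> E f <= E g.
Proof. by move=> hf hg fg; rewrite /E le_Rintegral. Qed.

Lemma E_ge0 f : (forall x, 0 <= f x) -> 0 <= E f.
Proof. by move=> f0; rewrite /E Rintegral_ge0. Qed.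

Lemma ler_norm_E f g : Int f -> Int g -> (forall x, `|f x| <= g x) -> `|E f| <= E g.
Proof.
move=> hf hg fg; apply: le_trans (le_normr_Rintegral _ hf) _ => //.
exact: ler_E (Int_norm hf) hg fg.
Qed.

Lemma E_indic f (A : set T) : measurable A ->
  E (fun x => f x * \1_A x) = fine (\int[P]_(x in A) (f x)%:E)%E.
Proof.
move=> mA; rewrite /E /Rintegral [in RHS]integral_mkcond; congr fine.
by apply: eq_integral => x _; rewrite /patch indicE; case: (_ \in _);
  rewrite ?mulr1 ?mulr0.
Qed.

Lemma L2_Int f : L2 f -> Int f.
Proof.
move=> [mf i2]; apply: Int_le (IntD (Int_cst 1) i2) _ => // x.
rewrite -(real_normK (num_real (f x))); have := normr_ge0 (f x).
by move: `|f x| => u u0; nra.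
Qed.

Lemma L2M_Int f g : L2 f -> L2 g -> Int (fun x => f x * g x).
Proof.
move=> [mf i2] [mg j2]; apply: Int_le (IntD i2 j2) _; first exact: measurable_funM.
move=> x; rewrite normrM -(real_normK (num_real (f x))) -(real_normK (num_real (g x))).
by have := normr_ge0 (f x); have := normr_ge0 (g x); move: `|f x| `|g x| => u v; nra.
Qed.

Lemma eq_L2 f g : (forall x, f x = g x) -> L2 f -> L2 g.
Proof.
move=> fg [mf i2]; split; first by apply: eq_measurable_fun mf => x _; rewrite fg.
by apply: eq_Int i2 => x; rewrite fg.
Qed.

Lemma L2_cst k : L2 (fun _ => k).
Proof. by split; [exact: measurable_cst | exact: Int_cst]. Qed.

Lemma L2D f g : L2 f -> L2 g -> L2 (fun x => f x + g x).
Proof.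
move=> [mf i2] [mg j2]; split; first exact: measurable_funD.
apply: Int_le (IntD (IntZ 2 i2) (IntZ 2 j2)) _.
  exact/measurable_funX/measurable_funD.
move=> x; rewrite ger0_norm ?sqr_ge0 //.
by have := sqr_ge0 (f x - g x); nra.
Qed.

Lemma L2N f : L2 f -> L2 (fun x => - f x).
Proof.
move=> [mf i2]; split; first exact: measurableT_comp.
by apply: eq_Int i2 => x; rewrite sqrrN.
Qed.

Lemma L2B f g : L2 f -> L2 g -> L2 (fun x => f x - g x).
Proof. by move=> hf /L2N; apply: L2D. Qed.

Lemma L2_sum (I : Type) (s : seq I) (F : I -> T -> R) :
  (forall i, L2 (F i)) -> L2 (fun x => \sum_(i <- s) F i x).
Proof.
move=> hF; elim: s => [|i s ih].
  by apply: eq_L2 (L2_cst 0) => x; rewrite big_nil.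
by apply: eq_L2 (L2D (hF i) ih) => x; rewrite big_cons.
Qed.

Lemma Lfun2_L2 f : f \in Lfun P 2%:E -> L2 f.
Proof.
move=> hf; split; last exact: Lfun2_integrable_sqr.
by move: hf; rewrite inE => /andP[]; rewrite inE.
Qed.

Lemma second_moment_mx_quad (p : nat) (W : 'I_p -> T -> R) (v : 'cV[R]_p) :
  (forall i, L2 (W i)) ->
  (v^T *m second_moment_mx P W *m v) ord0 ord0 =
  E (fun x => (\sum_i v i ord0 * W i x) ^+ 2).
Proof.
move=> hW.
have hI i j : Int (fun x => v i ord0 * v j ord0 * (W i x * W j x)).
  exact/IntZ/L2M_Int.
rewrite (@eq_E _ (fun x => \sum_i \sum_j v i ord0 * v j ord0 * (W i x * W j x))).
  rewrite E_sum; last by move=> i; apply: Int_sum.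
  rewrite mxE; under eq_bigr => j _ do rewrite !mxE big_distrl /=.
  rewrite exchange_big /=; apply: eq_bigr => i _.
  rewrite E_sum //; apply: eq_bigr => j _.
  by rewrite !mxE EZ ?L2M_Int // ExE mulrAC.
move=> x; rewrite expr2 big_distrl /=; apply: eq_bigr => i _.
by rewrite big_distrr /=; apply: eq_bigr => j _; rewrite mulrACA.
Qed.

Lemma second_moment_mx_nonneg_def (p : nat) (W : 'I_p -> T -> R) :
  (forall i, L2 (W i)) -> nonneg_def (second_moment_mx P W).
Proof. by move=> hW v; rewrite second_moment_mx_quad //; apply: E_ge0 => x; exact: sqr_ge0. Qed.

Lemma second_moment_mxB (p : nat) (U V : 'I_p -> T -> R) :
  (forall i, L2 (U i)) -> (forall i, L2 (V i)) ->
  (forall i j, E (fun x => U i x * V j x) = 0) ->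
  second_moment_mx P (fun j x => U j x - V j x) =
  second_moment_mx P U + second_moment_mx P V.
Proof.
move=> hU hV UV; apply/matrixP => i j; rewrite !mxE !ExE.
rewrite (@eq_E _ (fun x => (U i x * U j x + V i x * V j x) -
                          (U i x * V j x + U j x * V i x))); last by move=> x; ring.
rewrite EB ?IntD ?L2M_Int // !ED ?L2M_Int //.
by rewrite !UV addr0 subr0.
Qed.

End expectation.

Section staircase.
Context {R : realType}.
Implicit Types (dl x : R) (N : nat).

(* [staircase dl x N = dl * min(N, floor (x / dl))]: a simple function of [x]
   within [dl] of [x] on [[0, N * dl]]. *)
Definition staircase dl x N : R :=
  \sum_(k < N) (if (k.+1)%:R * dl <= x then dl else 0).

Lemma staircaseS dl x N :
  staircase dl x N.+1 = staircase dl x N + (if N.+1%:R * dl <= x then dl else 0).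
Proof. by rewrite /staircase big_ord_recr. Qed.

Lemma staircase_ge0 dl x N : 0 <= dl -> 0 <= staircase dl x N.
Proof. by move=> dl0; apply: sumr_ge0 => k _; case: ifP. Qed.

Lemma staircase_le dl x N : 0 <= dl -> staircase dl x N <= N%:R * dl.
Proof.
move=> dl0; apply: le_trans (_ : \sum_(k < N) dl <= _).
  by apply: ler_sum => k _; case: ifP.
by rewrite sumr_const card_ord mulr_natl.
Qed.

Lemma staircase_full dl x N : 0 <= dl -> N%:R * dl <= x ->
  staircase dl x N = N%:R * dl.
Proof.
move=> dl0 hx; rewrite /staircase (eq_bigr (fun _ => dl)).
  by rewrite sumr_const card_ord mulr_natl.
move=> k _; rewrite ifT //; apply: le_trans hx.
by rewrite ler_wpM2r // ler_nat ltn_ord.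
Qed.

Lemma staircase_le_id dl x N : 0 <= dl -> 0 <= x -> staircase dl x N <= x.
Proof.
move=> dl0 x0; elim: N => [|N ih]; first by rewrite /staircase big_ord0.
rewrite staircaseS; case: ifP => hN; last by rewrite addr0.
by apply: le_trans hN; rewrite mulrSr mulrDl mul1r lerD2r staircase_le.
Qed.

Lemma staircase_err dl x N : 0 <= dl -> 0 <= x -> x <= N%:R * dl ->
  x - staircase dl x N <= dl.
Proof.
move=> dl0 x0; elim: N => [|N ih].
  rewrite mul0r => hx; have -> : x = 0 by apply/le_anti/andP.
  by rewrite /staircase big_ord0 subr0.
move=> hx; have [hN|hN] := leP x (N%:R * dl).
  apply: le_trans (ih hN); rewrite lerD2l lerN2 staircaseS lerDl.
  by case: ifP.
rewrite staircaseS staircase_full ?(ltW hN) //.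
apply: le_trans (_ : x - N%:R * dl <= _).
  by rewrite lerD2l lerN2 lerDl; case: ifP.
by rewrite lerBlDl; apply: le_trans hx _; rewrite -natr1 mulrDl mul1r.
Qed.

End staircase.

Lemma eq0_le_divn {R : realType} (D C : R) : 0 <= C ->
  (forall n : nat, `|D| <= C / n.+1%:R) -> D = 0.
Proof.
move=> C0 h; apply/eqP/negPn/negP => D0.
have Dp : 0 < `|D| by rewrite normr_gt0.
have hb := archi_boundP (divr_ge0 C0 (ltW Dp)).
set n := Num.Def.archi_bound _ in hb.
have := h n; rewrite ler_pdivlMr ?ltr0n // leNgt => /negP; apply.
rewrite -ltr_pdivrMl // mulrC; apply: lt_le_trans hb _.
by rewrite ler_nat.
Qed.

Section conditional_expectation.
Context {d : measure_display} {T : measurableType d} {R : realType}.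
Variable P : probability T R.
Variable H : set (set T).
Hypothesis HG : forall A, <<s H >> A -> measurable A.

Local Notation Int f := (P.-integrable setT (EFin \o f)).
Local Notation Gmeas f := (@measurable_fun _ _ (g_sigma_algebraType H) R setT f).
Local Notation E := (E P).
Implicit Types f : T -> R.

Lemma measurable_wrt_measurable_fun f : measurable_wrt <<s H >> f -> Gmeas f.
Proof. by move=> hf _ B mB; rewrite setTI; exact: hf. Qed.

Lemma Gmeas_measurable f : Gmeas f -> measurable_fun setT f.
Proof. by move=> mf _ B mB; apply: HG; exact: mf measurableT B mB. Qed.

Lemma Gset_ge f t : Gmeas f -> <<s H >> [set x | t <= f x].
Proof.
move=> /(_ measurableT _ (measurable_itv `[t, +oo[)); rewrite setTI.
by congr (<<s H >> _); apply/seteqP; split => x /=; rewrite in_itv /= andbT.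
Qed.

Lemma Gset_norm_le f K : Gmeas f -> <<s H >> [set x | `|f x| <= K].
Proof.
move=> mf; have /(_ measurableT _ (measurable_itv `]-oo, K])) : Gmeas (fun x => `|f x|).
  exact: measurableT_comp.
by rewrite setTI; congr (<<s H >> _); apply/seteqP; split => x /=; rewrite in_itv.
Qed.

Lemma norm_indic_le1 (A : set T) x : `|\1_A x : R| <= 1.
Proof. by rewrite indicE; case: (_ \in _); rewrite ?normr1 ?normr0. Qed.

Lemma norm_mul_indic_le f K x : 0 <= K ->
  `|f x * \1_[set x | `|f x| <= K] x| <= K.
Proof.
move=> K0; rewrite indicE; case: (boolP (x \in _)) => [/set_mem|_].
  by rewrite mulr1.
by rewrite mulr0 normr0.
Qed.

Section cond_exp_given.
Variables (Y c : T -> R).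
Hypotheses (hY : L2 P Y) (hcm : Gmeas c) (hci : Int c).
Hypothesis hset : forall A, <<s H >> A ->
  E (fun x => Y x * \1_A x) = E (fun x => c x * \1_A x).

Let hYi : Int Y. Proof. exact: L2_Int. Qed.

Section bounded_test.
Variables (g : T -> R) (M : R).
Hypotheses (hg : Gmeas g) (gb : forall x, 0 <= g x <= M).

Let mg : measurable_fun setT g := Gmeas_measurable hg.
Let M0 : 0 <= M. Proof. by have /andP[/le_trans] := gb point; apply. Qed.

Let level dl k := [set x | k.+1%:R * dl <= g x].

Let mlevel dl k : measurable (level dl k).
Proof. exact: HG (Gset_ge _ hg). Qed.

Let staircase_indic dl N x :
  staircase dl (g x) N = \sum_(k < N) dl * \1_(level dl k) x.
Proof.
apply: eq_bigr => k _; rewrite indicE.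
case: ifP => h; first by rewrite mem_set ?mulr1.
by rewrite memNset ?mulr0 //= => h'; rewrite h' in h.
Qed.

Let E_mul_staircase F dl N : Int F ->
  E (fun x => F x * staircase dl (g x) N) =
  \sum_(k < N) dl * E (fun x => F x * \1_(level dl k) x).
Proof.
move=> hF.
have hI k : Int (fun x => F x * \1_(level dl k) x).
  exact: IntM_bounded hF (measurable_indic (mlevel dl k)) (norm_indic_le1 _).
rewrite (@eq_E _ _ _ P _ (fun x => \sum_(k < N) dl * (F x * \1_(level dl k) x))).
  by rewrite E_sum => [|k]; [apply: eq_bigr => k _; rewrite EZ | exact: IntZ].
by move=> x; rewrite staircase_indic big_distrr; apply: eq_bigr => k _; rewrite mulrCA.
Qed.

Let staircase_approx F dl N : Int F -> 0 <= dl -> M <= N%:R * dl ->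
  `|E (fun x => F x * g x) - E (fun x => F x * staircase dl (g x) N)|
    <= dl * E (fun x => `|F x|).
Proof.
move=> hF dl0 MN.
have mstair : measurable_fun setT (fun x => staircase dl (g x) N).
  apply: eq_measurable_fun (fun x _ => esym (staircase_indic dl N x)) _.
  by apply: measurable_sum => k; apply: measurable_funM => //; exact: measurable_indic.
have h1 : Int (fun x => F x * g x).
  apply: (IntM_bounded (M := M)) hF mg _ => x.
  by have /andP[g0 gM] := gb x; rewrite ger0_norm.
have h2 : Int (fun x => F x * staircase dl (g x) N).
  apply: (IntM_bounded (M := N%:R * dl)) hF mstair _ => x.
  by rewrite ger0_norm ?staircase_ge0 // staircase_le.
rewrite -EB // -EZ; last exact: Int_norm.
apply: ler_norm_E; [exact: IntB | exact/IntZ/Int_norm |] => x.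
rewrite -mulrBr normrM mulrC ler_wpM2r //.
have /andP[g0 gM] := gb x.
by rewrite ger0_norm ?subr_ge0 ?staircase_le_id // staircase_err // (le_trans gM).
Qed.

Lemma cond_exp_mul_bounded : E (fun x => Y x * g x) = E (fun x => c x * g x).
Proof.
apply/eqP; rewrite -subr_eq0; apply/eqP.
apply: (@eq0_le_divn _ _ (M * (E (fun x => `|Y x|) + E (fun x => `|c x|)))).
  by rewrite mulr_ge0 ?addr_ge0 ?E_ge0.
move=> n; set dl := M / n.+1%:R.
have dl0 : 0 <= dl by rewrite divr_ge0.
have Mdl : M <= n.+1%:R * dl by rewrite mulrC divfK ?pnatr_eq0.
have eq_stair : E (fun x => Y x * staircase dl (g x) n.+1) =
                E (fun x => c x * staircase dl (g x) n.+1).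
  rewrite !E_mul_staircase //; apply: eq_bigr => k _.
  by congr (_ * _); exact: hset (Gset_ge _ hg).
rewrite mulrAC -/dl mulrDr.
apply: le_trans (lerD (staircase_approx hYi dl0 Mdl) (staircase_approx hci dl0 Mdl)).
by apply: le_trans (ler_normB _ _); rewrite eq_stair opprB addrA subrK.
Qed.

End bounded_test.

Lemma cond_exp_mul_trunc h K : Gmeas h -> 0 <= K ->
  let A := [set x | `|h x| <= K] in
  E (fun x => Y x * (h x * \1_A x)) = E (fun x => c x * (h x * \1_A x)).
Proof.
move=> hm K0 A; have GA : <<s H >> A by exact: Gset_norm_le.
have mI : measurable_fun setT (\1_A : T -> R) by exact/measurable_indic/HG.
pose g x := (h x + K) * \1_A x.
have gm : Gmeas g.
  apply: measurable_funM; first by apply: measurable_funD => //; exact: measurable_cst.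
  exact: (@measurable_indic _ (g_sigma_algebraType H) R setT A GA).
have gb x : 0 <= g x <= K + K.
  rewrite /g indicE; case: (boolP (x \in A)) => [/set_mem|_]; last by rewrite mulr0 lexx addr_ge0.
  by rewrite /A /= mulr1 ler_norml => /andP[? ?]; apply/andP; split; lra.
have split_trunc F : Int F -> E (fun x => F x * (h x * \1_A x)) =
    E (fun x => F x * g x) - K * E (fun x => F x * \1_A x).
  move=> hF; have i1 : Int (fun x => F x * g x).
    apply: (IntM_bounded (M := K + K)) hF (Gmeas_measurable gm) _ => x.
    by have /andP[? ?] := gb x; rewrite ger0_norm.
  have i2 : Int (fun x => F x * \1_A x) := IntM_bounded hF mI (norm_indic_le1 _).
  by rewrite -EZ // -EB ?IntZ //; apply: eq_E => x; rewrite /g; lra.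
rewrite split_trunc ?hYi // split_trunc //.
by rewrite (cond_exp_mul_bounded gm gb) hset.
Qed.

Lemma cond_exp_trunc_sqr_le K : 0 <= K ->
  let A := [set x | `|c x| <= K] in
  Int (fun x => c x ^+ 2 * \1_A x) /\
  E (fun x => c x ^+ 2 * \1_A x) <= E (fun x => Y x ^+ 2).
Proof.
move=> K0 A; have mI : measurable_fun setT (\1_A : T -> R).
  exact: measurable_indic (HG (Gset_norm_le K hcm)).
have mcA : measurable_fun setT (fun x => c x * \1_A x).
  exact: measurable_funM (Gmeas_measurable hcm) mI.
have sqr_trunc x : c x ^+ 2 * \1_A x = c x * (c x * \1_A x).
  by rewrite mulrA -expr2.
have iq : Int (fun x => c x ^+ 2 * \1_A x).
  apply: eq_Int (IntM_bounded hci mcA (fun x => norm_mul_indic_le c x K0)) => x.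
  by rewrite sqr_trunc.
have iy : Int (fun x => Y x * (c x * \1_A x)).
  exact: IntM_bounded hYi mcA (fun x => norm_mul_indic_le c x K0).
have [_ iy2] := hY.
split => //.
have eq_cY : E (fun x => c x ^+ 2 * \1_A x) = E (fun x => Y x * (c x * \1_A x)).
  by rewrite (cond_exp_mul_trunc hcm K0); apply: eq_E.
have amgm : E (fun x => Y x * (c x * \1_A x)) <=
            2^-1 * (E (fun x => Y x ^+ 2) + E (fun x => c x ^+ 2 * \1_A x)).
  rewrite -ED // -EZ ?IntD //; apply: ler_E => //; first exact/IntZ/IntD.
  move=> x; have -> : c x ^+ 2 * \1_A x = (c x * \1_A x) ^+ 2.
    by rewrite exprMn; congr (_ * _); rewrite indicE; case: (_ \in _);
      rewrite ?expr1n ?expr0n.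
  by have := sqr_ge0 (Y x - c x * \1_A x); move: (c x * \1_A x) => u; nra.
lra.
Qed.


Lemma cond_exp_L2 : L2 P c.
Proof.
have mc := Gmeas_measurable hcm; split => //.
pose F n := [set x | `|c x| <= n%:R].
have mF n : measurable (F n) by exact: HG (Gset_norm_le _ hcm).
have ndF : nondecreasing_seq F.
  by move=> m n mn; apply/subsetPset => x /le_trans; apply; rewrite ler_nat.
have UF : \bigcup_n F n = setT.
  apply/seteqP; split => // x _; exists (Num.Def.archi_bound `|c x|) => //.
  exact/ltW/archi_boundP.
have mc2 : measurable_fun setT (fun x => c x ^+ 2) by exact: measurable_funX.
have cvgF : (\int[P]_(x in F n) (c x ^+ 2)%:E)%E @[n --> \oo] -->
    (\int[P]_(x in setT) (c x ^+ 2)%:E)%E.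
  rewrite -UF; apply: ge0_nondecreasing_set_cvg_integral => //.
    by move=> n; apply/measurable_funTS/measurable_EFinP.
  by move=> n x _; rewrite lee_fin sqr_ge0.
have le_Y2 n : (\int[P]_(x in F n) (c x ^+ 2)%:E <= (E (fun x => Y x ^+ 2))%:E)%E.
  have [iq le] := cond_exp_trunc_sqr_le (ler0n R n).
  rewrite integral_mkcond (eq_integral (fun x => (c x ^+ 2 * \1_(F n) x)%:E)).
    by rewrite -(fineK (integrable_fin_num measurableT iq)) lee_fin.
  by move=> x _; rewrite /patch indicE; case: (_ \in _); rewrite /= ?mulr1 ?mulr0.
apply/integrableP; split; first exact/measurable_EFinP.
apply: le_lt_trans (ltry (E (fun x => Y x ^+ 2))).
under eq_integral do rewrite /= ger0_norm ?sqr_ge0 //.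
rewrite -(cvg_lim _ cvgF) //; apply: lime_le; first exact: cvgP cvgF.
exact: nearW.
Qed.

Lemma cond_exp_orthogonal h : Gmeas h -> L2 P h ->
  E (fun x => (Y x - c x) * h x) = 0.
Proof.
move=> hm hL; pose f x := (Y x - c x) * h x.
have fi : Int f := L2M_Int (L2B hY cond_exp_L2) hL.
have mf := Int_measurable fi.
pose A n := [set x | `|h x| <= n%:R].
have mI n : measurable_fun setT (\1_(A n) : T -> R).
  exact: measurable_indic (HG (Gset_norm_le _ hm)).
have fAi n : Int (fun x => f x * \1_(A n) x) := IntM_bounded fi (mI n) (norm_indic_le1 _).
have E_fA n : (\int[P]_x (f x * \1_(A n) x)%:E = 0)%E.
  rewrite -(fineK (integrable_fin_num measurableT (fAi n))) -[fine _]/(E _).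
  have hA x : `|h x * \1_(A n) x| <= n%:R := norm_mul_indic_le h x (ler0n R n).
  have mhA := measurable_funM (Gmeas_measurable hm) (mI n).
  rewrite (@eq_E _ _ _ _ _ (fun x => Y x * (h x * \1_(A n) x) - c x * (h x * \1_(A n) x))).
    by rewrite EB ?(IntM_bounded _ mhA hA) // (cond_exp_mul_trunc hm (ler0n R n)) subrr.
  by move=> x; rewrite /f !mulrBl !mulrA.
have f_cvg : {ae P, forall x, setT x ->
    (fun n => (f x * \1_(A n) x)%:E) @ \oo --> (EFin \o f) x}.
  apply: aeW => x _; apply: cvg_near_cst.
  exists (Num.Def.archi_bound `|h x|) => // n /= hn.
  rewrite indicE mem_set ?mulr1 // /A /=.
  by apply: le_trans (ltW (archi_boundP (normr_ge0 _))) _; rewrite ler_nat.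
have f_dom : {ae P, forall x n, setT x ->
    (`|(f x * \1_(A n) x)%:E| <= (`|f x|)%:E)%E}.
  apply: aeW => x n _ /=; rewrite lee_fin normrM.
  by rewrite indicE; case: (_ \in _); rewrite ?normr1 ?normr0 ?mulr1 ?mulr0.
have [_ _ cvg0] := dominated_convergence measurableT
  (fun n => (measurable_EFinP _ _).2 (measurable_funM mf (mI n)))
  ((measurable_EFinP _ _).2 mf) f_cvg (Int_norm fi) f_dom.
move: cvg0; rewrite (funext E_fA) => /cvg_lim; rewrite lim_cst // => f0.
by rewrite /E /Rintegral -f0.
Qed.

End cond_exp_given.

Lemma is_cond_exp_L2_orthogonal Y c : L2 P Y -> is_cond_exp P <<s H >> Y c ->
  L2 P c /\ forall h, Gmeas h -> L2 P h -> E (fun x => (Y x - c x) * h x) = 0.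
Proof.
move=> hY [/measurable_wrt_measurable_fun hcm /Lfun1_integrable hci hint].
have hset A : <<s H >> A -> E (fun x => Y x * \1_A x) = E (fun x => c x * \1_A x).
  by move=> GA; rewrite !E_indic ?hint //; exact: HG.
split; first exact: (cond_exp_L2 hY hcm hci hset).
by move=> h; exact: (cond_exp_orthogonal hY hcm hci hset).
Qed.

End conditional_expectation.

Section generated_sigma_algebra.
Context {d : measure_display} {T : measurableType d} {R : realType}.
Variable P : probability T R.
Variables (n : nat) (F : 'I_n -> T -> R).
Hypothesis mF : forall k, measurable_fun setT (F k).

Local Notation Gmeas f :=
  (@measurable_fun _ _ (g_sigma_algebraType
     (\big[setU/set0]_(k < n) preimage_set_system setT (F k) measurable)) R setT f).

Lemma sigma_gen_measurable : sigma_gen F `<=` measurable.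
Proof.
apply: smallest_sub (sigma_algebra_measurable _) _.
apply: (big_ind (fun S : set (set T) => S `<=` measurable)) => //.
  by move=> S1 S2 h1 h2 A' [/h1|/h2].
by move=> k _ A' [B mB <-]; exact: mF measurableT B mB.
Qed.

Lemma sigma_gen1_sub k : sigma_gen1 (F k) `<=` sigma_gen F.
Proof.
apply: smallest_sub (smallest_sigma_algebra _ _) _ => A hA.
by apply: sub_sigma_algebra; rewrite (bigD1 k) //=; left.
Qed.

Lemma additive_space_Gmeas_L2 h : in_additive_space P F h -> Gmeas h /\ L2 P h.
Proof.
move=> [ck [hck /funext ->]]; split.
  apply: measurable_sum => k; have [hw _ _] := hck k.
  by move=> _ B mB; apply: sigma_gen1_sub; rewrite setTI; exact: hw.
by apply: L2_sum => k; have [_ /Lfun2_L2] := hck k.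
Qed.

End generated_sigma_algebra.

Section positive_definite.
Context {R : realType} {p : nat}.
Implicit Types S T : 'M[R]_p.

Lemma pos_def_nonneg_def S : pos_def S -> nonneg_def S.
Proof.
move=> hS v; have [->|v0] := eqVneq v 0; last exact/ltW/hS.
by rewrite trmx0 !mul0mx mxE.
Qed.

Lemma pos_def_unitmx S : pos_def S -> S \in unitmx.
Proof.
move=> hS; rewrite -row_free_unit; apply: inj_row_free => v vS0.
apply/eqP/negPn/negP => v0.
have vT0 : v^T != 0 by rewrite -(inj_eq (@trmx_inj _ _ _)) trmxK trmx0.
by move: (hS _ vT0); rewrite trmxK vS0 mul0mx mxE ltxx.
Qed.

Lemma pos_defD S T : pos_def S -> nonneg_def T -> pos_def (S + T).
Proof.
by move=> hS hT v v0; rewrite mulmxDr mulmxDl mxE ltr_wpDr ?hT ?hS.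
Qed.

Lemma pos_def0 S : pos_def (0 : 'M[R]_p) -> S = 0.
Proof.
move=> h0; apply/matrixP => i j; exfalso.
have v0 : (const_mx 1 : 'cV[R]_p) != 0.
  by apply/eqP => /matrixP /(_ i ord0); rewrite !mxE; apply/eqP; exact: oner_neq0.
by move: (h0 _ v0); rewrite mulmx0 mul0mx mxE ltxx.
Qed.

Lemma invmx_le_nonneg_def S T : S^T = S -> T^T = T ->
  pos_def S -> nonneg_def T -> nonneg_def (invmx S - invmx (S + T)).
Proof.
move=> sS sT hS hT v.
have hST := pos_defD hS hT.
have sST : (S + T)^T = S + T by rewrite linearD /= sS sT.
set x := invmx S *m v; set y := invmx (S + T) *m v.
have Sx : S *m x = v by rewrite mulKVmx ?pos_def_unitmx.
have STy : (S + T) *m y = v by rewrite mulKVmx ?pos_def_unitmx.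
have vT_x : v^T = x^T *m S by rewrite -Sx trmx_mul sS.
have vT_y : v^T = y^T *m (S + T) by rewrite -STy trmx_mul sST.
have yTv : y^T *m v = v^T *m y.
  rewrite -[v in LHS]trmxK -trmx_mul; apply/matrixP => i j.
  by rewrite mxE (ord1 i) (ord1 j).
have quad : v^T *m (invmx S - invmx (S + T)) *m v =
            (x - y)^T *m S *m (x - y) + y^T *m T *m y.
  have yTSx : y^T *m S *m x = y^T *m v by rewrite -mulmxA Sx.
  have yTTy : y^T *m T *m y = v^T *m y - y^T *m S *m y.
    by rewrite vT_y mulmxDr mulmxDl addrC addKr.
  have -> : v^T *m (invmx S - invmx (S + T)) *m v = v^T *m x - v^T *m y.
    by rewrite mulmxBr mulmxBl !mulmxA.
  rewrite [(x - y)^T]linearB /= !mulmxBl -vT_x.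
  by rewrite yTTy !mulmxBr yTSx yTv subrK.
by rewrite quad mxE addr_ge0 ?hT // (pos_def_nonneg_def hS).
Qed.

End positive_definite.

Lemma second_moment_mx_sym {d : measure_display} {T : measurableType d}
  {R : realType} (P : probability T R) (p : nat) (U : 'I_p -> T -> R) :
  (second_moment_mx P U)^T = second_moment_mx P U.
Proof.
apply/matrixP => i j; rewrite !mxE; congr (Ex P _); apply: funext => x.
exact: mulrC.
Qed.

Lemma nonneg_defZ {R : realType} (p : nat) (a : R) (A : 'M[R]_p) :
  0 <= a -> nonneg_def A -> nonneg_def (a *: A).
Proof. by move=> a0 hA v; rewrite -scalemxAr -scalemxAl mxE mulr_ge0. Qed.

Lemma fisher_info_ge0 {R : realType} (g g' : R -> R) : 0 <= fisher_info g g'.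
Proof.
apply/fine_ge0/integral_ge0 => x /= gx0.
by rewrite lee_fin divr_ge0 ?sqr_ge0 ?ltW.
Qed.

Theorem theorem2 (d0 : measure_display) (Omega : measurableType d0)
  (R : realType) (P : probability Omega R) (p d : nat)
  (Y eps : Omega -> R) (X : 'I_p -> Omega -> R) (Z : 'I_d -> Omega -> R)
  (beta0 : 'I_p -> R) (m0Z : Omega -> R) (g0 g0' : R -> R)
  (condX eta : 'I_p -> Omega -> R) :
  (* data model  Y = X^T beta0 + m0(Z) + eps *)
  (forall j, X j \in Lfun P 2%:E) ->
  (forall k, measurable_fun setT (Z k)) ->
  measurable_fun setT eps ->
  measurable_wrt (sigma_gen Z) m0Z ->
  (forall w, Y w = \sum_(j < p) X j w * beta0 j + m0Z w + eps w) ->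
  (* Z supported in [0,1]^d *)
  P [set w | forall k, 0 <= Z k w <= 1] = 1%E ->
  (* eps independent of (X, Z) *)
  indep_of P eps (sigma_gen (fun i : 'I_(p + d) =>
                    match fintype.split i with inl j => X j | inr k => Z k end)) ->
  (* eps has a symmetric, absolutely continuous density g0 with finite
     Fisher information *)
  has_density P eps g0 ->
  (forall x, g0 (- x) = g0 x) ->
  abs_cont_with_deriv g0 g0' ->
  (fisher_info_e g0 g0' < +oo)%E ->
  (* condX j = E0(X_j | Z) and eta j = projection of condX j onto H(q0) *)
  (forall j, is_cond_exp P (sigma_gen Z) (X j) (condX j)) ->
  (forall j, is_proj_additive P Z (condX j) (eta j)) ->
  let Ig := fisher_info g0 g0' in
  let Iadd := Ig *: second_moment_mx P (fun j w => X j w - eta j w) in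
  let IPL := Ig *: second_moment_mx P (fun j w => X j w - condX j w) in
  let M := second_moment_mx P (fun j w => eta j w - condX j w) in
  pos_def IPL ->
  (M != 0 -> loewner_lt (invmx Iadd) (invmx IPL)) /\
  (M = 0 -> invmx Iadd = invmx IPL).
Proof.
move=> hX hZ _ _ _ _ _ _ _ _ _ hce hproj Ig Iadd IPL M hpd.
have L2X j : L2 P (X j) := Lfun2_L2 (hX j).
have ce j := is_cond_exp_L2_orthogonal (sigma_gen_measurable hZ) (L2X j) (hce j).
have eta_Gmeas_L2 j := additive_space_Gmeas_L2 (hproj j).1.
have L2W j : L2 P (fun w => eta j w - condX j w) := L2B (eta_Gmeas_L2 j).2 (ce j).1.
have orth i j : E P (fun w => (X i w - condX i w) * (eta j w - condX j w)) = 0.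
  apply: (ce i).2 (L2W j); apply: measurable_funB; first exact: (eta_Gmeas_L2 j).1.
  by have [/measurable_wrt_measurable_fun] := hce j.
have eIadd : Iadd = IPL + Ig *: M.
  have L2V i : L2 P (fun w => X i w - condX i w) := L2B (L2X i) (ce i).1.
  rewrite /Iadd /IPL /M -scalerDr -(second_moment_mxB L2V L2W orth).
  congr (_ *: second_moment_mx P _); apply/funext => j; apply/funext => w.
  by rewrite opprB addrA subrK.
have nonneg_IgM : nonneg_def (Ig *: M).
  exact/nonneg_defZ/second_moment_mx_nonneg_def/L2W/fisher_info_ge0.
rewrite eIadd; split => [M0|->]; last by rewrite scaler0 addr0.
split; first by apply: invmx_le_nonneg_def; rewrite ?linearZ /= ?second_moment_mx_sym.
apply/negP => /eqP /(congr1 invmx); rewrite !invmxK => /eqP.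
rewrite -subr_eq0 addrC addKr scalemx_eq0 (negbTE M0) orbF => /eqP Ig0.
by move: hpd; rewrite /IPL Ig0 scale0r => /(pos_def0 M) /eqP; apply/negP.
Qed.
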